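(* Let $T$ be a ditree, let $S_1,\dots,S_t$ be all the source sets and sink sets of $T$ that contain no leaf of $T$, and let $\mathcal{L}$ be the set of all leaves of $T$. Let $M=\mathcal{L}\cup\{s_1,\dots,s_t\}$ where $s_i\in S_i$ for each $i$ (so $M$ contains $\mathcal{L}$ and exactly one vertex from each $S_i$). Then $M$ is a minimum-size geodetic set of $T$.
   Context: All digraphs are finite, without loops or parallel arcs. The underlying undirected graph of a digraph is obtained by forgetting orientations and deleting parallel edges. A ditree is a digraph whose underlying undirected graph is a tree (it may contain $2$-cycles, i.e., pairs of opposite arcs $uv,vu$). A leaf is a vertex of degree $1$ in the underlying undirected graph. For $S\subseteq V(D)$, $N^-(S)$ (resp. $N^+(S)$) is the set of vertices outside $S$ having an arc to (resp. from) some vertex of $S$. A source set is a maximal strongly connected component $S$ with $N^-(S)\setminus S=\emptyset$; a sink set is a maximal strongly connected component $S$ with $N^+(S)\setminus S=\emptyset$. For vertices $u,v$, $I(u,v)$ is the set of vertices on some shortest directed path from $u$ to $v$; for $S\subseteq V(D)$, $I(S)=\bigcup_{u,v\in S}(I(u,v)\cup I(v,u))$. A geodetic set is a set $S$ with $I(S)=V(D)$. *)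

(* A digraph on a finite vertex type V is an arc relation
   a : rel V (no parallel arcs by construction; no loops = irreflexive a). *)
From mathcomp Require Import all_boot.
Set Implicit Arguments.
Unset Strict Implicit.
Unset Printing Implicit Defensive.

Section Digraphs.
Variables (V : finType) (a : rel V).

Definition und : rel V := fun u v => a u v || a v u.

Definition und_connected : Prop := forall u v : V, connect und u v.
Definition und_acyclic : Prop :=
  forall c : seq V, uniq c -> 2 < size c -> ~~ cycle und c.

Definition ditree : Prop := irreflexive a /\ und_connected /\ und_acyclic.

Definition is_leaf (v : V) : bool := #|[set w | und v w]| == 1.
Definition leaves : {set V} := [set v | is_leaf v].

Definition scc (v : V) : {set V} := [set w | connect a v w && connect a w v].
Definition is_scc (S : {set V}) : bool := [exists v, S == scc v].

Definition source_set (S : {set V}) : bool :=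
  is_scc S && [forall x, forall y, ((y \in S) && a x y) ==> (x \in S)].
Definition sink_set (S : {set V}) : bool :=
  is_scc S && [forall x, forall y, ((x \in S) && a x y) ==> (y \in S)].

Definition leafless_source_sink_sets : {set {set V}} :=
  [set S | (source_set S || sink_set S) && [disjoint S & leaves]].

(* directed walks: u :: p is a directed walk from u to last u p *)
Definition dwalk (u v : V) (p : seq V) : Prop := path a u p /\ last u p = v.

Definition in_interval (u v w : V) : Prop :=
  exists p : seq V, [/\ dwalk u v p, w \in u :: p &
    forall q : seq V, dwalk u v q -> size p <= size q].

Definition geodetic (S : {set V}) : Prop :=
  forall w : V, exists u v : V,
    [/\ u \in S, v \in S & in_interval u v w \/ in_interval v u w].

Definition min_geodetic (M : {set V}) : Prop :=
  geodetic M /\ forall S : {set V}, geodetic S -> #|M| <= #|S|.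

End Digraphs.

(* A leaf lies on a shortest path only as an endpoint, and a shortest path
   through a source (sink) set starts (ends) in it.  Distinct source and sink
   sets are disjoint, so a geodetic set contains all leaves plus one further
   vertex in each leafless source or sink set: it is at least as large as M.

   Conversely, let M contain the leaves and meet every source and sink set,
   and let w be outside M.  In a tree, a walk that reaches w inside one branch
   of T - w and leaves it into another branch is a shortest path, so it
   suffices to find distinct neighbours n1 -> w -> n2 such that M reaches n1
   and n2 reaches M inside T - w; call n1 an in-witness and n2 an out-witness.
   If the only arc between w and a neighbour n is w -> n, then n cannot reach
   w, so n reaches a sink set, hence M: it is an out-witness.  If w and n form
   a 2-cycle, let Y be the strong component of n in T - w: an arc leaving Y
   towards a vertex that cannot reach w leads to a sink set, an arc entering Y
   from a vertex that w cannot reach comes from a source set, and otherwise Y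
   is a whole branch of T - w and contains a leaf.  So every neighbour is a
   witness of some kind.  An out-witness exists, since otherwise the strong
   component of w would be a sink set, and its vertex in M would make a
   2-cycle neighbour an out-witness; reversing all arcs gives an in-witness.
   If they coincide, another neighbour exists because w is not a leaf, and it
   replaces one of them. *)

From mathcomp Require Import all_boot zify.
Set Implicit Arguments.
Unset Strict Implicit.
Unset Printing Implicit Defensive.

Notation converse e := [rel x y | e y x].

Section Avoid.
Variables (V : finType) (e : rel V).

Definition avoid (w : V) : rel V := fun x y => [&& e x y, x != w & y != w].

Lemma avoid_sub w : subrel (avoid w) e.
Proof. by move=> x y /andP[]. Qed.

Lemma connect_avoid_sub w : subrel (connect (avoid w)) (connect e).
Proof. by apply: connect_sub => x y /avoid_sub/connect1. Qed.

Lemma path_avoid w x p : path e x p -> w \notin x :: p -> path (avoid w) x p.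
Proof.
elim: p x => //= y p IHp x /andP[exy ep].
rewrite !inE !negb_or => /and3P[wx wy wp].
by rewrite /avoid exy !(eq_sym _ w) wx wy IHp // inE negb_or wy.
Qed.

Lemma path_avoid_connect w x p : path e x p -> w \notin x :: p ->
  connect (avoid w) x (last x p).
Proof. by move=> ep wp; apply/connectP; exists p; first exact: path_avoid. Qed.

Lemma avoid_path_notin w x p : path (avoid w) x p -> x != w -> w \notin x :: p.
Proof.
elim: p x => [|y p IHp] x /=; first by rewrite inE eq_sym.
case/andP=> /and3P[_ _ yw] ap xw; rewrite inE eq_sym (negPf xw).
exact: IHp.
Qed.

Lemma connect_avoid_neq w x y : connect (avoid w) x y -> (x != w) = (y != w).
Proof.
case/connectP=> -[_ -> // | z p /= /andP[/and3P[_ -> zw] ap] ->]; apply/esym.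
by apply: contraNneq (avoid_path_notin ap zw) => <-; apply: mem_last.
Qed.

Lemma path_connect_last x p y : path e x p -> y \in x :: p -> connect e y (last x p).
Proof.
move=> ep yp; case/splitPl: yp ep => p1 p2 <-; rewrite cat_path last_cat => /andP[_ ep2].
by apply/connectP; exists p2.
Qed.

Lemma connect_avoid_or w x y : connect e x y ->
  connect (avoid w) x y \/ connect e x w /\ connect e w y.
Proof.
case/connectP=> p ep ->; have [wp|wp] := boolP (w \in x :: p).
  by right; split; [exact: (path_connect ep wp) | exact: path_connect_last ep wp].
by left; apply: path_avoid_connect.
Qed.

Lemma first_step w x : connect e w x -> x != w ->
  exists2 n, e w n & connect (avoid w) n x.
Proof.
case/connectP=> p ep ->; case/shortenP: ep => [[|n q]] //=; first by rewrite eqxx.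
case/andP=> ewn enq /andP[wq _] _ _; exists n => //.
exact: path_avoid_connect.
Qed.

End Avoid.

Lemma connect_converse (V : finType) (e : rel V) x y :
  connect (converse e) x y = connect e y x.
Proof. exact: connect_rev. Qed.

Lemma connect_avoid_converse (V : finType) (e : rel V) w x y :
  connect (avoid (converse e) w) x y = connect (avoid e w) y x.
Proof.
transitivity (connect (converse (avoid e w)) x y); last exact: connect_converse.
by apply: eq_connect => u v; rewrite /avoid /= [(u != w) && _]andbC.
Qed.

Lemma last_step (V : finType) (e : rel V) w x : connect e x w -> x != w ->
  exists2 n, e n w & connect (avoid e w) x n.
Proof.
move=> xw nxw; have [|n enw nx] := @first_step _ (converse e) w x _ nxw.
  by rewrite connect_converse.
by exists n; rewrite // -connect_avoid_converse.
Qed.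

Section Tree.
Variables (V : finType) (e : rel V).
Hypotheses (e_sym : symmetric e) (e_irr : irreflexive e).
Hypothesis e_acyclic : forall c : seq V, uniq c -> 2 < size c -> ~~ cycle e c.

Lemma connect_avoid_sym w : connect_sym (avoid e w).
Proof.
by apply: sym_connect_sym => x y; rewrite /avoid e_sym [(x != w) && _]andbC.
Qed.

Lemma branch_eq w n1 n2 : e w n1 -> e w n2 -> connect (avoid e w) n1 n2 -> n1 = n2.
Proof.
move=> ewn1 ewn2 /connectP[p ap n2E]; have [//|n12] := eqVneq n1 n2; exfalso.
case/shortenP: ap n2E => q aq uq _ n2E.
have n1w : n1 != w by apply: contraTneq ewn1 => ->; rewrite e_irr.
have q0 : q != [::] by apply: contraNneq n12 => q0; rewrite n2E q0.
apply: (negP (e_acyclic (c := w :: n1 :: q) _ _)).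
- by rewrite cons_uniq (avoid_path_notin aq n1w).
- by case: q {aq uq n2E} q0.
by rewrite /= ewn1 rcons_path (sub_path (@avoid_sub _ e w) aq) -n2E e_sym.
Qed.

Lemma uniq_path_subset u p q : uniq (u :: p) -> path e u p -> path e u q ->
  last u q = last u p -> {subset u :: p <= u :: q}.
Proof.
move=> up ep eq' qp x xp; apply/negPn/negP => xq.
have xu : x != u by apply: contraNneq xq => ->; apply: mem_head.
have xl : x != last u p by rewrite -qp; apply: contraNneq xq => ->; apply: mem_last.
move: xp; rewrite inE (negPf xu) /= => xp.
case/splitPr: xp up ep qp xl => p1 [|t2 p2] up ep qp xl.
  by rewrite last_cat eqxx in xl.
move: ep; rewrite cat_path /= => /and4P[ep1 et1x ext2 ep2].
move: up; rewrite -cat_cons cat_uniq => /and3P[_ /hasPn dis up2].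
have xp1 : x \notin u :: p1 by apply: dis; apply: mem_head.
have t2p1 : t2 \notin u :: p1 by apply: dis; rewrite !inE eqxx orbT.
have xp2 : x \notin t2 :: p2 by case/andP: up2.
suff t2E : last u p1 = t2 by rewrite -t2E mem_last in t2p1.
apply: (branch_eq _ ext2); first by rewrite e_sym.
have := path_avoid_connect eq' xq; rewrite qp last_cat /= => c2.
apply: connect_trans (connect_trans _ c2) _; rewrite connect_avoid_sym;
  exact: path_avoid_connect.
Qed.

Lemma uniq_path_extend_max x p : path e x p -> uniq (x :: p) ->
  exists q, [/\ path e x (p ++ q), uniq (x :: p ++ q) &
    forall t, e (last x (p ++ q)) t -> t \in x :: p ++ q].
Proof.
have [k] := ubnP (#|V| - size p); elim: k p => // k IHk p ltk ep up.
case: (pickP [pred t | e (last x p) t && (t \notin x :: p)]) => [t /andP[et tp]|maxp].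
  have up' : uniq (x :: rcons p t) by rewrite -rcons_cons rcons_uniq tp up.
  have ltk' : #|V| - size (rcons p t) < k.
    have := max_card (mem (x :: rcons p t)); rewrite (card_uniqP up') /= size_rcons.
    (* the two occurrences of [#|V|] differ in hidden coercions *)
    by move: ltk; move: #|V| => N; lia.
  have ep' : path e x (rcons p t) by rewrite rcons_path ep.
  by have [q] := IHk _ ltk' ep' up'; exists (t :: q); rewrite -cat_rcons.
exists [::]; rewrite cats0; split=> // t et; apply/negPn/negP => tp.
by have /= := maxp t; rewrite et tp.
Qed.

Lemma uniq_path_last_neighbor x r l t : uniq (x :: rcons r l) ->
  path e x (rcons r l) -> t \in x :: rcons r l -> e l t -> t = last x r.
Proof.
move=> + + tr elt; rewrite -rcons_cons rcons_uniq rcons_path => /andP[lr _] /andP[er erl].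
have tl : t != l by apply: contraTneq elt => ->; rewrite e_irr.
move: tr; rewrite -rcons_cons mem_rcons inE (negPf tl) /= => tr.
apply: (branch_eq elt); first by rewrite e_sym.
exact: path_connect_last (path_avoid er lr) tr.
Qed.

Lemma leaf_in_branch w n : e w n ->
  exists2 l, connect (avoid e w) n l & #|[set t | e l t]| == 1.
Proof.
move=> ewn; have nw : n != w by apply: contraTneq ewn => ->; rewrite e_irr.
have ew : path e w [:: n] by rewrite /= ewn.
have uw : uniq [:: w; n] by rewrite /= inE eq_sym nw.
have [q [ewq uwq maxq]] := uniq_path_extend_max ew uw.
rewrite cat1s in ewq uwq maxq.
have [wnq enq] : w \notin n :: q /\ path e n q by case/andP: uwq; case/andP: ewq.
exists (last n q); first exact: path_avoid_connect.
rewrite (lastI n q) in ewq uwq maxq.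
set r := belast n q in ewq uwq maxq *; set l := last n q in ewq uwq maxq *.
apply/cards1P; exists (last w r); apply/setP => t; rewrite !inE.
apply/idP/eqP => [elt|->].
  have tq : t \in w :: rcons r l by apply: maxq; rewrite last_rcons.
  exact: uniq_path_last_neighbor uwq ewq tq elt.
by move: ewq; rewrite rcons_path e_sym => /andP[].
Qed.

End Tree.

Section Digraph.
Variables (V : finType) (a : rel V).

Lemma und_sym : symmetric (und a).
Proof. by move=> x y; rewrite /und orbC. Qed.

Lemma sub_und : subrel a (und a).
Proof. by move=> x y; rewrite /und => ->. Qed.

Lemma und_rev x y : a y x -> und a x y.
Proof. by rewrite und_sym; apply: sub_und. Qed.

Lemma connect_avoid_und w : subrel (connect (avoid a w)) (connect (avoid (und a) w)).
Proof.
apply: connect_sub => x y /and3P[axy xw yw].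
by apply: connect1; rewrite /avoid sub_und ?xw ?yw.
Qed.

Lemma scc_id v : v \in scc a v.
Proof. by rewrite inE connect0. Qed.

Lemma is_scc_eq (C1 C2 : {set V}) x : is_scc a C1 -> is_scc a C2 ->
  x \in C1 -> x \in C2 -> C1 = C2.
Proof.
have scc_eq v : x \in scc a v -> scc a v = scc a x.
  rewrite inE => /andP[vx xv]; apply/setP => y; rewrite !inE.
  by apply/andP/andP => -[] ? ?; split; apply: connect_trans; eassumption.
by move=> /existsP[v1 /eqP->] /existsP[v2 /eqP->] /scc_eq-> /scc_eq->.
Qed.

Lemma sink_set_connect (C : {set V}) x y : sink_set a C -> x \in C ->
  connect a x y -> y \in C.
Proof.
case/andP=> _ /forallP closedC xC /connectP[p ap ->].
elim: p x xC ap => //= z p IHp x xC /andP[axz ap]; apply: IHp ap.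
by apply: implyP (forallP (closedC x) z) _; rewrite xC axz.
Qed.

Lemma sink_exists c : exists2 x, sink_set a (scc a x) & connect a c x.
Proof.
pose succs x := #|[set y | connect a x y]|.
have [x cx minx] := arg_minnP succs (connect0 a c).
exists x => //; apply/andP; split; first by apply/existsP; exists x.
apply/forallP => y; apply/forallP => z; apply/implyP => /andP[].
rewrite !inE => /andP[xy yx] ayz; have xz := connect_trans xy (connect1 ayz).
rewrite xz; apply/negPn/negP => zx.
have : succs z < succs x.
  apply: proper_card; apply/properP; split.
    by apply/subsetP => t; rewrite !inE; apply: connect_trans xz.
  by exists x; rewrite !inE.
by rewrite ltnNge minx // (connect_trans cx xz).
Qed.

Lemma shortest_walk_uniq u v p : dwalk a u v p ->
  (forall q, dwalk a u v q -> size p <= size q) -> uniq (u :: p).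
Proof.
case=> ap vE minp; case/shortenP: ap vE => q aq uq qp vE.
apply: (leq_size_uniq uq) => [x|]; last exact: minp q (conj aq vE).
by rewrite !inE => /orP[->|/qp->]; rewrite ?orbT.
Qed.

Lemma uniq_walk_interior_not_leaf u p l : uniq (u :: p) -> path a u p ->
  l \in p -> l != last u p -> l \notin leaves a.
Proof.
move=> + + lp; case/splitPr: lp => p1 [|t p2]; first by rewrite last_cat eqxx.
rewrite -cat_cons cat_uniq cat_path.
move=> /and3P[_ /hasPn dis _] /andP[_ /and3P[atl alt _]] _.
have tp1 : t \notin u :: p1 by apply: dis; rewrite !inE eqxx orbT.
rewrite inE /is_leaf; apply: contraNN tp1 => /cards1P[x N].
have neighbor y : und a l y -> y = x by move=> aly; apply/set1P; rewrite -N inE.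
by rewrite (neighbor t (sub_und alt)) -(neighbor _ (und_rev atl)) mem_last.
Qed.

Lemma in_interval_leaf u v l : in_interval a u v l -> l \in leaves a -> l = u \/ l = v.
Proof.
case=> p [[ap vE] lp minp] lL; have up := shortest_walk_uniq (conj ap vE) minp.
have [->|lu] := eqVneq l u; [by left | move: lp; rewrite inE (negPf lu) /= => lp].
have [->|lv] := eqVneq l v; first by right.
by rewrite -vE in lv; rewrite (negPf (uniq_walk_interior_not_leaf up ap lp lv)) in lL.
Qed.

Lemma other_neighbor w n : w \notin leaves a -> und a w n ->
  exists2 n', und a w n' & n' != n.
Proof.
move=> wL wn; have [n' /andP[]|none] := pickP [pred n' | und a w n' && (n' != n)].
  by exists n'.
case/negP: wL; rewrite inE /is_leaf; apply/cards1P; exists n; apply/setP => t.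
rewrite !inE; apply/idP/eqP => [wt|->//]; apply/eqP.
by have /= := none t; rewrite wt => /negbFE.
Qed.

Lemma geodetic_leaves (S : {set V}) : geodetic a S -> leaves a \subset S.
Proof.
move=> gS; apply/subsetP => l lL; have [u [v [uS vS]]] := gS l.
by case=> /in_interval_leaf/(_ lL)[]->.
Qed.

End Digraph.

Section Converse.
Variables (V : finType) (a : rel V).

Lemma und_converse : und (converse a) =2 und a.
Proof. by move=> x y; rewrite /und orbC. Qed.

Lemma scc_converse v : scc (converse a) v = scc a v.
Proof. by apply/setP => x; rewrite !inE !(connect_converse a) andbC. Qed.

Lemma is_scc_converse C : is_scc (converse a) C = is_scc a C.
Proof. by apply: eq_existsb => v; rewrite scc_converse. Qed.

Lemma sink_set_converse C : sink_set (converse a) C = source_set a C.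
Proof.
rewrite /source_set /sink_set is_scc_converse; congr (_ && _).
by apply/forallP/forallP => closedC x; apply/forallP => y; apply: (forallP (closedC y) x).
Qed.

Lemma und_acyclic_converse : und_acyclic a -> und_acyclic (converse a).
Proof. by move=> acyc c uc sc; rewrite (eq_cycle und_converse); apply: acyc. Qed.

End Converse.

Section GeodeticLowerBound.
Variables (V : finType) (a : rel V).

Lemma source_set_connect (C : {set V}) x y : source_set a C -> y \in C ->
  connect a x y -> x \in C.
Proof.
move=> srcC yC xy; apply: (@sink_set_connect _ (converse a) C y) yC _.
  by rewrite sink_set_converse.
by rewrite connect_converse.
Qed.

Lemma in_interval_source_sink (C : {set V}) u v z : in_interval a u v z ->
  z \in C -> source_set a C || sink_set a C -> (u \in C) || (v \in C).
Proof.
case=> p [[ap vE] zp _] zC /orP[srcC|snkC].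
  by rewrite (source_set_connect srcC zC (path_connect ap zp)).
by rewrite -vE (sink_set_connect snkC zC (path_connect_last ap zp)) orbT.
Qed.

Lemma geodetic_meets (S C : {set V}) : geodetic a S ->
  source_set a C || sink_set a C -> exists2 x, x \in S & x \in C.
Proof.
move=> gS ssC; have [v vC] : exists v, v \in C.
  by case/orP: ssC => /andP[/existsP[v /eqP->] _]; exists v; apply: scc_id.
have [u [y [uS yS]]] := gS v.
case=> /in_interval_source_sink/(_ vC ssC)/orP[];
  by [exists u | exists y | exists y | exists u].
Qed.

End GeodeticLowerBound.

Definition strong_conn (V : finType) (e : rel V) (x y : V) : bool :=
  connect e x y && connect e y x.

Lemma strong_conn_avoid_converse (V : finType) (e : rel V) w x y :
  strong_conn (avoid (converse e) w) x y = strong_conn (avoid e w) x y.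
Proof. by rewrite /strong_conn !(connect_avoid_converse e) andbC. Qed.

Definition out_reach (V : finType) (a : rel V) (M : {set V}) (w n : V) : bool :=
  a w n && [exists v in M, connect (avoid a w) n v].

Definition in_reach (V : finType) (a : rel V) (M : {set V}) (w n : V) : bool :=
  out_reach (converse a) M w n.

Lemma out_reachI (V : finType) (a : rel V) (M : {set V}) w n v :
  a w n -> v \in M -> connect (avoid a w) n v -> out_reach a M w n.
Proof.
by move=> awn vM nv; rewrite /out_reach awn; apply/existsP; exists v; rewrite vM.
Qed.

Section DiTree.
Variables (V : finType) (a : rel V).
Hypotheses (a_irr : irreflexive a) (a_acyclic : und_acyclic a).

Lemma und_irr : irreflexive (und a).
Proof. by move=> x; rewrite /und a_irr. Qed.

Lemma arc_neq x y : a x y -> x != y.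
Proof. by apply: contraTneq => ->; rewrite a_irr. Qed.

Lemma und_branch_eq w n1 n2 : und a w n1 -> und a w n2 ->
  connect (avoid (und a) w) n1 n2 -> n1 = n2.
Proof. exact: (branch_eq (@und_sym V a) und_irr a_acyclic). Qed.

Lemma connect_avoid_und_sym w x y :
  connect (avoid a w) x y -> connect (avoid (und a) w) y x.
Proof. by move/connect_avoid_und; rewrite connect_avoid_sym //; apply: und_sym. Qed.

Lemma uniq_walk_interval u p w : uniq (u :: p) -> path a u p -> w \in u :: p ->
  in_interval a u (last u p) w.
Proof.
move=> up ap wp; exists p; split=> // q [aq qE].
have und_path := sub_path (@sub_und V a).
exact: uniq_leq_size up (uniq_path_subset (@und_sym V a) und_irr a_acyclic
  up (und_path _ _ ap) (und_path _ _ aq) qE).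
Qed.

Lemma interval_through w u v n1 n2 : a n1 w -> a w n2 -> n1 != n2 ->
  connect (avoid a w) u n1 -> connect (avoid a w) n2 v -> in_interval a u v w.
Proof.
move=> an1w awn2 n12 un1 n2v.
have /connectP[p ap vE] : connect a u v.
  apply: connect_trans (connect_avoid_sub un1) _; apply: connect_trans (connect1 an1w) _.
  exact: connect_trans (connect1 awn2) (connect_avoid_sub n2v).
case/shortenP: ap vE => q aq uq _ vE; subst v; apply: uniq_walk_interval => //.
apply/negPn/negP => wq; case/eqP: n12.
apply: und_branch_eq (und_rev an1w) (sub_und awn2) _.
apply: connect_trans (connect_avoid_und_sym un1) _.
apply: connect_trans (connect_avoid_und (path_avoid_connect aq wq)) _.
exact: connect_avoid_und_sym n2v.
Qed.

Lemma scc_two_cycle w x : x \in scc a w -> x != w ->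
  exists2 n, a w n && a n w & strong_conn (avoid a w) n x.
Proof.
rewrite inE => /andP[wx xw] xnw.
have [n1 awn1 n1x] := first_step wx xnw; have [n2 an2w xn2] := last_step xw xnw.
have n12 : n1 = n2.
  apply: und_branch_eq (sub_und awn1) (und_rev an2w) _.
  exact: connect_avoid_und (connect_trans n1x xn2).
by subst n2; exists n1; rewrite ?awn1 ?an2w // /strong_conn n1x.
Qed.

Lemma strong_conn_avoid_succ w n x t : a n w -> strong_conn (avoid a w) n x ->
  a x t -> t != w -> connect a t w -> strong_conn (avoid a w) n t.
Proof.
move=> anw /andP[nx xn] axt tw tw'.
have xw : x != w by rewrite -(connect_avoid_neq nx) arc_neq.
have xt : connect (avoid a w) x t by apply: connect1; rewrite /avoid axt xw tw.
have [n' an'w tn'] := last_step tw' tw.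
suff n'n : n' = n by subst n'; rewrite /strong_conn (connect_trans nx xt) tn'.
apply: und_branch_eq (und_rev an'w) (und_rev anw) _.
apply: connect_trans (connect_avoid_und_sym tn') _.
exact: connect_trans (connect_avoid_und_sym xt) (connect_avoid_und xn).
Qed.

Variable M : {set V}.
Hypothesis M_meets_sinks : forall C, sink_set a C -> exists2 m, m \in M & m \in C.

Lemma connect_sink_avoid w y : ~~ connect a y w ->
  exists2 m, m \in M & connect (avoid a w) y m.
Proof.
move=> ynw; have [z snk yz] := sink_exists a y; have [m mM] := M_meets_sinks snk.
rewrite inE => /andP[zm _]; exists m => //.
by case: (connect_avoid_or w (connect_trans yz zm)) => // -[yw _]; rewrite yw in ynw.
Qed.

Lemma out_reach_one_way w n : a w n -> ~~ a n w -> out_reach a M w n.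
Proof.
move=> awn nanw; have nw : n != w by rewrite eq_sym arc_neq.
suff [m mM nm] : exists2 m, m \in M & connect (avoid a w) n m.
  exact: out_reachI awn mM nm.
apply: connect_sink_avoid; apply/negP => /last_step/(_ nw)[n' an'w nn'].
suff n'n : n' = n by rewrite -n'n an'w in nanw.
exact: und_branch_eq (und_rev an'w) (sub_und awn) (connect_avoid_und_sym nn').
Qed.

Lemma out_reach_escape w n x y : a w n -> strong_conn (avoid a w) n x ->
  a x y -> y != w -> ~~ connect a y w -> out_reach a M w n.
Proof.
move=> awn /andP[nx _] axy yw ynw; have [m mM ym] := connect_sink_avoid ynw.
have xw : x != w by rewrite -(connect_avoid_neq nx) eq_sym arc_neq.
apply: out_reachI awn mM (connect_trans nx (connect_trans _ ym)).
by apply: connect1; rewrite /avoid axy xw yw.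
Qed.

Lemma no_out_reach_sink w : (forall n, ~~ out_reach a M w n) -> sink_set a (scc a w).
Proof.
move=> none; apply/andP; split; first by apply/existsP; exists w.
apply/forallP => x; apply/forallP => y; apply/implyP => /andP[xC axy].
have wx : connect a w x by move: xC; rewrite inE => /andP[].
apply/negPn/negP => yC.
have ynw : ~~ connect a y w.
  by apply: contra yC => yw; rewrite inE yw (connect_trans wx (connect1 axy)).
have [xw|xnw] := eqVneq x w.
  rewrite xw in axy; apply: (negP (none y)); apply: out_reach_one_way axy _.
  by apply: contra ynw => /connect1.
have yw : y != w by apply: contraNneq yC => ->; apply: scc_id.
have [n /andP[awn _] nx] := scc_two_cycle xC xnw.
exact: (negP (none n)) (out_reach_escape awn nx axy yw ynw).
Qed.

Lemma exists_out_reach w : w \notin M -> exists n, out_reach a M w n.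
Proof.
move=> wM; have [/existsP //|/existsPn none] := boolP [exists n, out_reach a M w n].
exfalso.
have [m mM mC] := M_meets_sinks (no_out_reach_sink none).
have mw : m != w by apply: contraNneq wM => <-.
have [n /andP[awn _] /andP[nm _]] := scc_two_cycle mC mw.
exact: (negP (none n)) (out_reachI awn mM nm).
Qed.

End DiTree.

Section Geodetic.
Variables (V : finType) (a : rel V) (M : {set V}).
Hypotheses (a_irr : irreflexive a) (a_acyclic : und_acyclic a).
Hypothesis leaves_M : leaves a \subset M.
Hypothesis M_meets :
  forall C, source_set a C || sink_set a C -> exists2 m, m \in M & m \in C.

Let conv_irr : irreflexive (converse a) := fun x => a_irr x.
Let conv_acyclic : und_acyclic (converse a) := und_acyclic_converse a_acyclic.

Let M_meets_sinks C : sink_set a C -> exists2 m, m \in M & m \in C.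
Proof. by move=> snkC; apply: M_meets; rewrite snkC orbT. Qed.

Let M_meets_conv_sinks C : sink_set (converse a) C -> exists2 m, m \in M & m \in C.
Proof. by rewrite sink_set_converse => srcC; apply: M_meets; rewrite srcC. Qed.

Lemma strong_conn_avoid_pred w n x t : a w n -> strong_conn (avoid a w) n x ->
  a t x -> t != w -> connect a w t -> strong_conn (avoid a w) n t.
Proof.
move=> awn nx atx tw wt; rewrite -strong_conn_avoid_converse.
apply: (strong_conn_avoid_succ conv_irr conv_acyclic (x := x)) => //.
  by rewrite strong_conn_avoid_converse.
by rewrite connect_converse.
Qed.

Lemma in_reach_one_way w n : a n w -> ~~ a w n -> in_reach a M w n.
Proof. exact: (out_reach_one_way conv_irr conv_acyclic M_meets_conv_sinks). Qed.

Lemma in_reach_escape w n x y : a n w -> strong_conn (avoid a w) n x ->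
  a y x -> y != w -> ~~ connect a w y -> in_reach a M w n.
Proof.
move=> anw nx ayx yw wy.
have nx' : strong_conn (avoid (converse a) w) n x by rewrite strong_conn_avoid_converse.
have wy' : ~~ connect (converse a) y w by rewrite connect_converse.
exact: (out_reach_escape conv_irr M_meets_conv_sinks anw nx' ayx yw wy').
Qed.

Lemma exists_in_reach w : w \notin M -> exists n, in_reach a M w n.
Proof. exact: (exists_out_reach conv_irr conv_acyclic M_meets_conv_sinks). Qed.

Lemma two_cycle_reach w n : a w n -> a n w -> in_reach a M w n || out_reach a M w n.
Proof.
move=> awn anw.
have [x /existsP[y /and4P[Yx axy yw ynw]]|no_out] := pickP [pred x | [exists y,
  [&& strong_conn (avoid a w) n x, a x y, y != w & ~~ connect a y w]]].
  by rewrite (out_reach_escape a_irr M_meets_sinks awn Yx axy yw ynw) orbT.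
have [x /existsP[y /and4P[Yx ayx yw wny]]|no_in] := pickP [pred x | [exists y,
  [&& strong_conn (avoid a w) n x, a y x, y != w & ~~ connect a w y]]].
  by rewrite (in_reach_escape anw Yx ayx yw wny).
have closedY : closed (avoid (und a) w) [pred x | strong_conn (avoid a w) n x].
  apply: (intro_closed (connect_avoid_sym (@und_sym V a) w)).
  move=> x t /and3P[/orP[axt|atx] _ tw]; rewrite !inE => Yx.
    apply: (strong_conn_avoid_succ a_irr a_acyclic anw Yx axt tw).
    apply/negPn/negP => tnw.
    by have /existsPn/(_ t) := negbT (no_out x); rewrite Yx axt tw tnw.
  apply: (strong_conn_avoid_pred awn Yx atx tw); apply/negPn/negP => wnt.
  by have /existsPn/(_ t) := negbT (no_in x); rewrite Yx atx tw wnt.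
have [l nl lL] := leaf_in_branch (@und_sym V a) (und_irr a_irr) a_acyclic (sub_und awn).
have /andP[nl' _] : strong_conn (avoid a w) n l.
  by have := closed_connect closedY nl; rewrite !inE /strong_conn connect0 => <-.
by rewrite (out_reachI awn _ nl') ?orbT // (subsetP leaves_M) ?inE.
Qed.

Lemma neighbor_reach w n : und a w n -> in_reach a M w n || out_reach a M w n.
Proof.
move=> wn; have [awn|nawn] := boolP (a w n); have [anw|nanw] := boolP (a n w).
- exact: two_cycle_reach.
- by rewrite out_reach_one_way ?orbT.
- by rewrite in_reach_one_way.
- by move: wn; rewrite /und (negPf nawn) (negPf nanw).
Qed.

Lemma reach_interval w n1 n2 : in_reach a M w n1 -> out_reach a M w n2 -> n1 != n2 ->
  exists u v, [/\ u \in M, v \in M & in_interval a u v w].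
Proof.
case/andP=> an1w /existsP[u /andP[uM]]; rewrite connect_avoid_converse => un1.
case/andP=> awn2 /existsP[v /andP[vM n2v]] n12.
exists u, v; split=> //.
exact: (interval_through a_irr a_acyclic an1w awn2 n12 un1 n2v).
Qed.

Lemma leaves_source_sink_geodetic : geodetic a M.
Proof.
move=> w; have [wM|wM] := boolP (w \in M).
  exists w, w; split=> //; left.
  by apply: (uniq_walk_interval a_irr a_acyclic (p := [::])); rewrite ?inE.
suff [n1 [n2 [i1 o2 n12]]] :
    exists n1 n2, [/\ in_reach a M w n1, out_reach a M w n2 & n1 != n2].
  by have [u [v [uM vM uvw]]] := reach_interval i1 o2 n12; exists u, v; split=> //; left.
have [n1 i1] := exists_in_reach wM.
have [n2 o2] := exists_out_reach a_irr a_acyclic M_meets_sinks wM.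
have [n12|n12] := eqVneq n1 n2; last by exists n1, n2.
subst n2.
have wL : w \notin leaves a by apply: contra wM; apply: (subsetP leaves_M).
have wn1 : und a w n1 by case/andP: i1 => /= /und_rev.
have [n' /neighbor_reach/orP[i'|o'] n'n1] := other_neighbor wL wn1.
  by exists n', n1.
by exists n1, n'; rewrite eq_sym.
Qed.

End Geodetic.

Lemma card_blocks (T : finType) (F : {set {set T}}) (A : {set T}) :
  trivIset F -> (forall C, C \in F -> ~~ [disjoint C & A]) -> #|F| <= #|A|.
Proof.
move=> trivF meetA; apply: leq_trans (leq_imset_card (pblock F) A).
apply/subset_leq_card/subsetP => C CF.
have := meetA C CF; rewrite -setI_eq0 => /set0Pn[x /setIP[xC xA]].
by apply/imsetP; exists x; rewrite // (def_pblock trivF CF xC).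
Qed.

Section Minimum.
Variables (V : finType) (a : rel V).
Local Notation F := (leafless_source_sink_sets a).

Lemma leafless_is_scc C : C \in F -> is_scc a C.
Proof. by rewrite inE => /andP[/orP[]/andP[]]. Qed.

Lemma leafless_trivIset : trivIset F.
Proof.
apply/trivIsetP => C1 C2 C1F C2F; apply: contraR; rewrite -setI_eq0.
case/set0Pn=> x /setIP[x1 x2]; apply/eqP.
exact: is_scc_eq (leafless_is_scc C1F) (leafless_is_scc C2F) x1 x2.
Qed.

Lemma geodetic_card_lower (S : {set V}) : geodetic a S -> #|leaves a| + #|F| <= #|S|.
Proof.
move=> gS; rewrite -(cardsID (leaves a) S) (setIidPr (geodetic_leaves gS)) leq_add2l.
apply: card_blocks leafless_trivIset _ => C; rewrite inE => /andP[ssC disC].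
have [x xS xC] := geodetic_meets gS ssC.
rewrite -setI_eq0; apply/set0Pn; exists x.
by rewrite in_setI in_setD xS xC (disjointFr disC xC).
Qed.

Lemma leaves_reps_meet (s : {set V} -> V) : (forall C, C \in F -> s C \in C) ->
  forall C, source_set a C || sink_set a C ->
  exists2 m, m \in leaves a :|: [set s C | C in F] & m \in C.
Proof.
move=> sF C ssC; have [disC|] := boolP [disjoint C & leaves a].
  have CF : C \in F by rewrite inE ssC disC.
  by exists (s C); [rewrite inE imset_f ?orbT | apply: sF].
by rewrite -setI_eq0 => /set0Pn[x /setIP[xC xL]]; exists x; rewrite ?in_setU ?xL.
Qed.

End Minimum.

Theorem lemma5 (V : finType) (a : rel V) (s : {set V} -> V) :
  ditree a ->
  (forall S, S \in leafless_source_sink_sets a -> s S \in S) ->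
  min_geodetic a (leaves a :|: [set s S | S in leafless_source_sink_sets a]).
Proof.
case=> a_irr [_ a_acyclic] sF; split.
  exact: leaves_source_sink_geodetic a_irr a_acyclic (subsetUl _ _) (leaves_reps_meet sF).
move=> S gS; apply: leq_trans (geodetic_card_lower gS).
by apply: leq_trans (leq_card_setU _ _).1 _; rewrite leq_add2l leq_imset_card.
Qed.
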